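(* Let $\mathbb{F}$ be a field and $n\ge1$. For every $A\in M(n,\mathbb{F})$ we have $A\sim_{M(n,\mathbb{F})} A_s$. In particular, $A\sim_{M(n,\mathbb{F})} 0$ for every nilpotent $A\in M(n,\mathbb{F})$.
   Context: $M(n,\mathbb{F})$ denotes the semigroup of all $n\times n$ matrices over $\mathbb{F}$ under matrix multiplication, identified with linear operators on $\mathbb{F}^n$. Two elements $a,b$ of a semigroup $S$ are primarily $S$-conjugated if there are $x,y\in S$ with $a=xy$ and $b=yx$; $\sim_S$ is the transitive closure of primary $S$-conjugacy. For $A\in M(n,\mathbb{F})$ let $t\ge 0$ be such that $A^t(\mathbb{F}^n)=A^{t+i}(\mathbb{F}^n)$ for all $i\ge 0$; then $\mathbb{F}^n=A^t(\mathbb{F}^n)\oplus\ker(A^t)$, and $A_s$ is the linear operator with $A_s(v)=A(v)$ for $v\in A^t(\mathbb{F}^n)$ and $A_s(v)=0$ for $v\in\ker(A^t)$. *)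

From HB Require Import structures.
From mathcomp Require Import all_boot all_order all_algebra.
From Stdlib Require Import Relations.
Set Implicit Arguments. Unset Strict Implicit. Unset Printing Implicit Defensive.
Import GRing.Theory.
Local Open Scope ring_scope.

Definition prim_conj (F : fieldType) (n : nat) (a b : 'M[F]_n) : Prop :=
  exists x y : 'M[F]_n, a = x *m y /\ b = y *m x.

Definition mconj (F : fieldType) (n : nat) : relation 'M[F]_n :=
  clos_trans _ (@prim_conj F n).

Definition in_img (F : fieldType) (n : nat) (M : 'M[F]_n) (v : 'cV[F]_n) : Prop :=
  exists w : 'cV[F]_n, v = M *m w.

Definition is_As (F : fieldType) (n : nat) (A B : 'M[F]_n) : Prop :=
  exists t : nat,
    (forall i : nat, forall v, in_img (A ^+ t) v <-> in_img (A ^+ (t + i)) v) /\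
    (forall v, in_img (A ^+ t) v -> B *m v = A *m v) /\
    (forall v : 'cV[F]_n, A ^+ t *m v = 0 -> B *m v = 0).

From HB Require Import structures.
From mathcomp Require Import all_boot all_order all_algebra.
From Stdlib Require Import Relations.
Set Implicit Arguments.
Unset Strict Implicit.
Unset Printing Implicit Defensive.
Local Open Scope ring_scope.
Import GRing.Theory.

(* Induction on the stabilisation index t.  For a generalised inverse G with
   A G A = A, the idempotent P := A G satisfies P A = A, so A = P A ~ A P,
   and (A P)^(k+1) = A^(k+1) P has the image of A^(k+2): the index of A P
   drops by one, with (A P)_s = A_s P.  Finally A_s P ~ P A_s = A_s because
   the image of A_s lies in that of A.  At index 1, A_s = A. *)

Section CoreConjugacy.
Variables (F : fieldType) (n : nat).
Implicit Types (A B P : 'M[F]_n) (v w : 'cV[F]_n).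

Definition is_As_at (t : nat) A B : Prop :=
  [/\ forall i v, in_img (A ^+ t) v <-> in_img (A ^+ (t + i)) v,
      forall v, in_img (A ^+ t) v -> B *m v = A *m v
    & forall v, A ^+ t *m v = 0 -> B *m v = 0].

Lemma is_AsP A B : is_As A B <-> exists t, is_As_at t A B.
Proof. by split=> [[t [? [? ?]]] | [t [? ? ?]]]; exists t; split. Qed.

Lemma mulmx_vecP A B : (forall v, A *m v = B *m v) -> A = B.
Proof.
move=> eqAB; apply/matrixP=> i j.
by have := congr1 (fun v => v i 0) (eqAB (delta_mx j 0)); rewrite -!colE !mxE.
Qed.

Lemma mconj_refl A : mconj A A.
Proof. by apply: t_step; exists 1%:M, A; rewrite mul1mx mulmx1. Qed.

Lemma mconj_mulmxC A B : mconj (A *m B) (B *m A).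
Proof. by apply: t_step; exists A, B. Qed.

Lemma is_As_at_decomp t A B w : is_As_at t A B ->
  exists z, A ^+ t *m (w - A ^+ t *m z) = 0 /\ B *m w = A *m (A ^+ t *m z).
Proof.
case=> stabA eqBA kerB.
have [z eq_z] : in_img (A ^+ (t + t)) (A ^+ t *m w) by apply/stabA; exists w.
have ker_u : A ^+ t *m (w - A ^+ t *m z) = 0.
  by rewrite mulmxBr mulmxA mulmxE -exprD -eq_z subrr.
exists z; split=> //.
rewrite -[w in LHS](subrK (A ^+ t *m z)) mulmxDr (kerB _ ker_u) add0r.
by apply: eqBA; exists z.
Qed.

Lemma is_As_at1 A B : is_As_at 1 A B -> B = A.
Proof.
move=> AsB; apply: mulmx_vecP=> w.
have [z []] := is_As_at_decomp w AsB; rewrite expr1 => ker_u ->.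
by rewrite -[w in RHS](subrK (A *m z)) mulmxDr ker_u add0r.
Qed.

Lemma is_As_at_mulmxl t A B P : is_As_at t A B -> P *m A = A -> P *m B = B.
Proof.
move=> AsB PA; apply: mulmx_vecP=> w; rewrite -mulmxA.
by have [z [_ ->]] := is_As_at_decomp w AsB; rewrite mulmxA PA.
Qed.

Section RightFactor.
Variables (A G P : 'M[F]_n).
Hypotheses (defP : P = A *m G) (PA : P *m A = A).

Lemma exprS_mulmx_idl k : (A *m P) ^+ k.+1 = A ^+ k.+1 *m P.
Proof.
elim: k => [|k IHk]; first by rewrite !expr1.
by rewrite exprSr IHk -mulmxE -mulmxA (mulmxA P) PA mulmxA mulmxE -exprSr.
Qed.

Lemma in_img_mulmx_idl k v :
  in_img ((A *m P) ^+ k.+1) v <-> in_img (A ^+ k.+2) v.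
Proof.
rewrite exprS_mulmx_idl; split=> -[w ->].
  by exists (G *m w); rewrite defP (exprSr A k.+1) -mulmxE !mulmxA.
by exists (A *m w); rewrite (exprSr A k.+1) -mulmxE -!mulmxA (mulmxA P) PA.
Qed.

Lemma is_As_at_mulmx_idl t B :
  is_As_at t.+2 A B -> is_As_at t.+1 (A *m P) (B *m P).
Proof.
move=> AsB; have [stabA eqBA kerB] := AsB.
split=> [i v | v | v].
- by rewrite addSn; split=> /in_img_mulmx_idl/(stabA i)/in_img_mulmx_idl.
- case/in_img_mulmx_idl=> w defv.
  have Pv : P *m v = v by rewrite defv exprS -mulmxE !mulmxA PA.
  by rewrite -!mulmxA Pv eqBA //; exists w.
- rewrite exprS_mulmx_idl -!mulmxA => kerAPv; apply: kerB.
  by rewrite exprS -mulmxE -mulmxA kerAPv mulmx0.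
Qed.

End RightFactor.

Lemma is_As_at_mconj t A B : is_As_at t.+1 A B -> mconj A B.
Proof.
elim: t A B => [|t IHt] A B AsB; first by rewrite (is_As_at1 AsB); apply: mconj_refl.
pose P := A *m pinvmx A.
have PA : P *m A = A by rewrite mulmxKpV.
apply: (t_trans _ _ _ (A *m P)); first by rewrite -{1}PA; apply: mconj_mulmxC.
apply: (t_trans _ _ _ (B *m P)).
  exact: IHt (is_As_at_mulmx_idl (erefl P) PA AsB).
by rewrite -{2}(is_As_at_mulmxl AsB PA); apply: mconj_mulmxC.
Qed.

Lemma is_As_mconj A B : is_As A B -> mconj A B.
Proof.
case/is_AsP=> -[|t] AsB; last exact: is_As_at_mconj AsB.
have [_ eqBA _] := AsB.
have -> : B = A by apply: mulmx_vecP=> v; apply: eqBA; exists v; rewrite mul1mx.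
exact: mconj_refl.
Qed.

Lemma is_As_nilpotent A k : A ^+ k = 0 -> is_As A 0.
Proof.
move=> Ak; apply/is_AsP; exists k; split=> [i v | v | v _].
- by rewrite exprD Ak mul0r.
- by case=> w ->; rewrite Ak !mul0mx mulmx0.
- exact: mul0mx.
Qed.

End CoreConjugacy.

Theorem lemma2 (F : fieldType) (n : nat) (hn : (1 <= n)%N) :
  (forall A As : 'M[F]_n, is_As A As -> mconj A As) /\
  (forall A : 'M[F]_n, (exists k : nat, A ^+ k = 0) -> mconj A 0).
Proof.
split=> [A B | A [k Ak]]; first exact: is_As_mconj.
exact/is_As_mconj/(is_As_nilpotent Ak).
Qed.
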